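(* If the dataset is balanced, i.e. $s_{N+1}=s_1$, then for every $\theta\in\mathbb R^d$, $$w(\theta)\le 2f_d(\theta).$$
   Context: Finite-sample setting. Let $\mathcal S$ be a finite state space, $\phi:\mathcal S\to\mathbb R^d$ a feature map with $\|\phi(s)\|_2\le 1$ for all $s$, $r:\mathcal S\times\mathcal S\to\mathbb R$ a reward function and $\gamma\in[0,1)$. For a pair of states $(s,s')$ and $\theta\in\mathbb R^d$ let $g_{s,s'}(\theta)=(r(s,s')+\gamma\phi(s')^T\theta-\phi(s)^T\theta)\phi(s)$. A dataset is a state trajectory $s_1,\dots,s_{N+1}$, giving the $N$ pairs $(s_t,s_{t+1})$, $t=1,\dots,N$. Let $A_d=\frac1N\sum_{t=1}^N\phi(s_t)(\phi(s_t)-\gamma\phi(s_{t+1}))^T$ and $b_d=\frac1N\sum_{t=1}^N r(s_t,s_{t+1})\phi(s_t)$. Assume $A_d$ is nonsingular and let $\theta^*=A_d^{-1}b_d$. Define $f_d(\theta)=(\theta-\theta^* )^TA_d(\theta-\theta^* )$ and $w(\theta)=\frac1N\sum_{t=1}^N\|g_{s_t,s_{t+1}}(\theta)-g_{s_t,s_{t+1}}(\theta^* )\|^2$. *)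

From mathcomp Require Import all_boot all_order all_algebra.
Set Implicit Arguments. Unset Strict Implicit. Unset Printing Implicit Defensive.
Import Order.TTheory GRing.Theory Num.Theory.
Local Open Scope ring_scope.

Definition sqnorm (R : realFieldType) (d : nat) (v : 'cV[R]_d) : R :=
  \sum_(i < d) v i 0 ^+ 2.

Definition dotv (R : realFieldType) (d : nat) (u v : 'cV[R]_d) : R :=
  (u^T *m v) 0 0.

Definition td_g (R : realFieldType) (S : finType) (d : nat)
  (phi : S -> 'cV[R]_d) (r : S -> S -> R) (gamma : R)
  (s s' : S) (theta : 'cV[R]_d) : 'cV[R]_d :=
  (r s s' + gamma * dotv (phi s') theta - dotv (phi s) theta) *: phi s.

(* The trajectory is traj : nat -> S, with the states s_1,...,s_{N+1}
   represented as traj 0, ..., traj N; the pairs are (traj t, traj t.+1)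
   for t = 0, ..., N-1. *)

Definition A_d (R : realFieldType) (S : finType) (d : nat)
  (phi : S -> 'cV[R]_d) (gamma : R) (N : nat) (traj : nat -> S) : 'M[R]_d :=
  N%:R^-1 *: \sum_(t < N) (phi (traj t) *m (phi (traj t) - gamma *: phi (traj t.+1))^T).

Definition b_d (R : realFieldType) (S : finType) (d : nat)
  (phi : S -> 'cV[R]_d) (r : S -> S -> R) (N : nat) (traj : nat -> S) : 'cV[R]_d :=
  N%:R^-1 *: \sum_(t < N) (r (traj t) (traj t.+1) *: phi (traj t)).

Definition theta_star (R : realFieldType) (S : finType) (d : nat)
  (phi : S -> 'cV[R]_d) (r : S -> S -> R) (gamma : R) (N : nat) (traj : nat -> S)
  : 'cV[R]_d :=
  invmx (A_d phi gamma N traj) *m b_d phi r N traj.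

Definition f_d (R : realFieldType) (S : finType) (d : nat)
  (phi : S -> 'cV[R]_d) (r : S -> S -> R) (gamma : R) (N : nat) (traj : nat -> S)
  (theta : 'cV[R]_d) : R :=
  let e := theta - theta_star phi r gamma N traj in
  ((e^T *m A_d phi gamma N traj) *m e) 0 0.

Definition w_fun (R : realFieldType) (S : finType) (d : nat)
  (phi : S -> 'cV[R]_d) (r : S -> S -> R) (gamma : R) (N : nat) (traj : nat -> S)
  (theta : 'cV[R]_d) : R :=
  let ts := theta_star phi r gamma N traj in
  N%:R^-1 * \sum_(t < N)
     sqnorm (td_g phi r gamma (traj t) (traj t.+1) theta
             - td_g phi r gamma (traj t) (traj t.+1) ts).

From mathcomp Require Import all_boot all_order all_algebra.
From mathcomp Require Import ring lra.
Import Order.TTheory GRing.Theory Num.Theory.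
Local Open Scope ring_scope.

(* Put e = theta - theta_star and x_t = phi(s_t)^T e.  Since
   g_{s,s'} is affine in theta with linear part
   theta |-> (gamma phi(s')^T theta - phi(s)^T theta) phi(s), we get
     g_t(theta) - g_t(theta_star) = (gamma x_{t+1} - x_t) phi(s_t),
   so, as ||phi|| <= 1,  N w(theta) <= sum_t (x_t - gamma x_{t+1})^2, while
   directly from the definition of A_d,  N f_d(theta) = sum_t x_t (x_t - gamma x_{t+1}).
   Pointwise  2 x_t (x_t - gamma x_{t+1}) - (x_t - gamma x_{t+1})^2
            = x_t^2 - gamma^2 x_{t+1}^2,
   and for a balanced trajectory (s_{N+1} = s_1) the shifted sum of x_{t+1}^2
   equals the sum of x_t^2, so the difference is (1 - gamma^2) sum_t x_t^2 >= 0.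
   The file proves the vector identities (difference of TD updates, the
   quadratic form of A_d), the scalar inequality on cyclic sequences, and
   combines them in mainTheorem5. *)

Lemma dotvBr (R : realFieldType) (d : nat) (u a b : 'cV[R]_d) :
  dotv u (a - b) = dotv u a - dotv u b.
Proof. by rewrite /dotv mulmxBr !mxE. Qed.

Lemma dotvC (R : realFieldType) (d : nat) (u v : 'cV[R]_d) : dotv u v = dotv v u.
Proof. by rewrite /dotv -[u^T *m v]trmxK trmx_mul trmxK mxE. Qed.

Lemma sqnormZ (R : realFieldType) (d : nat) (c : R) (v : 'cV[R]_d) :
  sqnorm (c *: v) = c ^+ 2 * sqnorm v.
Proof. by rewrite /sqnorm mulr_sumr; apply: eq_bigr => i _; rewrite mxE exprMn. Qed.

Lemma sqnormZ_le (R : realFieldType) (d : nat) (c : R) (v : 'cV[R]_d) :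
  sqnorm v <= 1 -> sqnorm (c *: v) <= c ^+ 2.
Proof.
by move=> v_le1; rewrite sqnormZ -[leRHS]mulr1 ler_wpM2l // sqr_ge0.
Qed.

Lemma td_gB (R : realFieldType) (S : finType) (d : nat)
  (phi : S -> 'cV[R]_d) (r : S -> S -> R) (gamma : R) (s s' : S)
  (theta theta' : 'cV[R]_d) :
  td_g phi r gamma s s' theta - td_g phi r gamma s s' theta'
  = (gamma * dotv (phi s') (theta - theta') - dotv (phi s) (theta - theta'))
      *: phi s.
Proof. by rewrite /td_g -scalerBl !dotvBr; congr (_ *: _); ring. Qed.

Lemma A_d_quadratic (R : realFieldType) (S : finType) (d : nat)
  (phi : S -> 'cV[R]_d) (gamma : R) (N : nat) (traj : nat -> S)
  (e : 'cV[R]_d) :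
  let x t := dotv (phi (traj t)) e in
  ((e^T *m A_d phi gamma N traj) *m e) 0 0
  = N%:R^-1 * \sum_(t < N) x t * (x t - gamma * x t.+1).
Proof.
move=> x; rewrite /A_d -scalemxAr -scalemxAl mxE; congr (_ * _).
rewrite mulmx_sumr mulmx_suml summxE; apply: eq_bigr => t _.
rewrite (mulmxA e^T) -(mulmxA (e^T *m _)) mxE big_ord1.
congr (_ * _); first by rewrite /x dotvC.
by rewrite /x /dotv linearB /= mulmxBl linearZ /= -scalemxAl !mxE.
Qed.

Lemma sum_shift_periodic (R : realFieldType) (N : nat) (f : nat -> R) :
  f N = f 0%N -> \sum_(t < N) f t.+1 = \sum_(t < N) f t.
Proof.
case: N => [|n] periodic; first by rewrite !big_ord0.
by rewrite big_ord_recr big_ord_recl /= periodic addrC.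
Qed.

(* Scalar core of the theorem: for a periodic sequence x and gamma^2 <= 1,
   sum (x_t - gamma x_{t+1})^2 <= 2 sum x_t (x_t - gamma x_{t+1}), because
   the difference is (1 - gamma^2) sum x_t^2. *)
Lemma periodic_td_ineq (R : realFieldType) (N : nat) (gamma : R) (x : nat -> R) :
  gamma ^+ 2 <= 1 -> x N = x 0%N ->
  \sum_(t < N) (x t - gamma * x t.+1) ^+ 2
  <= 2 * \sum_(t < N) x t * (x t - gamma * x t.+1).
Proof.
move=> gamma2_le1 periodic.
have expand : 2 * \sum_(t < N) x t * (x t - gamma * x t.+1)
              - \sum_(t < N) (x t - gamma * x t.+1) ^+ 2
            = \sum_(t < N) x t ^+ 2 - gamma ^+ 2 * \sum_(t < N) x t.+1 ^+ 2.
  by rewrite !mulr_sumr -!sumrB; apply: eq_bigr => t _; ring.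
have sq_shift : \sum_(t < N) x t.+1 ^+ 2 = \sum_(t < N) x t ^+ 2.
  by apply: (@sum_shift_periodic R N (fun t => x t ^+ 2)); rewrite periodic.
have sq_ge0 : 0 <= \sum_(t < N) x t ^+ 2 by apply: sumr_ge0 => t _; exact: sqr_ge0.
rewrite -subr_ge0 expand sq_shift; nra.
Qed.

Theorem mainTheorem5 (R : realFieldType) (S : finType) (d : nat)
  (phi : S -> 'cV[R]_d) (r : S -> S -> R) (gamma : R) (N : nat) (traj : nat -> S) :
  (forall s : S, sqnorm (phi s) <= 1) ->
  0 <= gamma -> gamma < 1 ->
  (0 < N)%N ->
  A_d phi gamma N traj \in unitmx ->
  traj N = traj 0%N ->
  forall theta : 'cV[R]_d,
    w_fun phi r gamma N traj theta <= 2 * f_d phi r gamma N traj theta.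
Proof.
move=> phi_le1 gamma_ge0 gamma_lt1 _ _ balanced theta.
rewrite /w_fun /f_d A_d_quadratic.
set e := theta - _.
pose x t := dotv (phi (traj t)) e.
rewrite mulrCA ler_wpM2l ?invr_ge0 ?ler0n //.
apply: le_trans (@periodic_td_ineq R N gamma x _ _); last 2 first.
- by rewrite expr_le1 // ltW.
- by rewrite /x balanced.
apply: ler_sum => t _; rewrite td_gB.
have -> : (x t - gamma * x t.+1) ^+ 2 = (gamma * x t.+1 - x t) ^+ 2 by ring.
exact: sqnormZ_le.
Qed.
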